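(* Let $\alpha$ be a hinge angle with primary generating triple $(p,q,k)$. Then $$S_\alpha=\bigcup_{Q\in\{0,1,2,3\}}\{(2l+1)\,i^Q(p+qi)\ :\ l\in\mathbb N\},$$ where $\mathbb N=\{0,1,2,\dots\}$.
   Context: Identify $\mathbb Z^2$ with $\mathbb Z[i]$. Let $\mathcal H=\{w\in\mathbb C:\ \Re w\in\mathbb Z+\tfrac12\ \text{or}\ \Im w\in\mathbb Z+\tfrac12\}$. An angle $\alpha\in\mathbb R/2\pi\mathbb Z$ is a hinge angle if there exists $z\in\mathbb Z[i]$ with $ze^{i\alpha}\in\mathcal H$; its set of source points is $S_\alpha=\{z\in\mathbb Z[i]:\ e^{i\alpha}z\in\mathcal H\}$. For integers $p,q,k$ with $(k+\tfrac12)^2<p^2+q^2$, put $\lambda=\sqrt{p^2+q^2-(k+\tfrac12)^2}>0$ and let $\alpha(p,q,k)$ be the unique angle with $e^{i\alpha(p,q,k)}(p+qi)=k+\tfrac12+\lambda i$; such a triple is a generating triple of $\alpha$ if $\alpha(p,q,k)=\alpha$, and it is primary if it minimizes $p^2+q^2$ among the generating triples of $\alpha$ (it is unique). *)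

(* concrete reals R; Gaussian integers as pairs (a,b) : Z*Z  (a+bi). *)
From Stdlib Require Import Reals ZArith Lra.
Open Scope R_scope.

(* Multiplication by e^{i alpha} of the complex number x + y i, as a pair (Re, Im). *)
Definition rot_re (alpha x y : R) : R := x * cos alpha - y * sin alpha.
Definition rot_im (alpha x y : R) : R := x * sin alpha + y * cos alpha.

Definition half_int (x : R) : Prop := exists n : Z, x = IZR n + / 2.

Definition in_H (x y : R) : Prop := half_int x \/ half_int y.

Definition source_point (alpha : R) (a b : Z) : Prop :=
  in_H (rot_re alpha (IZR a) (IZR b)) (rot_im alpha (IZR a) (IZR b)).

Definition hinge_angle (alpha : R) : Prop := exists a b : Z, source_point alpha a b.

Definition gen_triple (alpha : R) (p q k : Z) : Prop :=
  (IZR k + / 2) ^ 2 < IZR p ^ 2 + IZR q ^ 2 /\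
  rot_re alpha (IZR p) (IZR q) = IZR k + / 2 /\
  rot_im alpha (IZR p) (IZR q) = sqrt (IZR p ^ 2 + IZR q ^ 2 - (IZR k + / 2) ^ 2).

Definition primary_triple (alpha : R) (p q k : Z) : Prop :=
  gen_triple alpha p q k /\
  forall p' q' k' : Z, gen_triple alpha p' q' k' -> (p ^ 2 + q ^ 2 <= p' ^ 2 + q' ^ 2)%Z.

Definition mul_i (z : Z * Z) : Z * Z := (- snd z, fst z)%Z.
Definition mul_iQ (Q : nat) (z : Z * Z) : Z * Z := Nat.iter Q mul_i z.
Definition zscale (c : Z) (z : Z * Z) : Z * Z := (c * fst z, c * snd z)%Z.

From Stdlib Require Import Reals ZArith Lra Lia Psatz Wf_nat.

(* Put w = p + qi and e^{i alpha} w = K + L i with K = k + 1/2, L > 0, L^2 = |w|^2 - K^2.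
   For z = a + bi the identity |w|^2 Re(e^{i alpha} z) = K (ap + bq) + L (aq - bp) shows
   that if Re(e^{i alpha} z) is a half-integer, then 2L(aq - bp) is an integer; as
   4L^2 = 4|w|^2 - (2k+1)^2 is 3 mod 4, it is not the square of a rational, so aq = bp.
   With d = gcd(p, q) this gives d z = r w and d(2m+1) = r(2k+1) for integers r, m.
   Primality forces gcd(d, 2k+1) = 1, since a common (odd) factor would scale the triple
   down, hence z = j w with j = r/d odd.  The case of a half-integral imaginary part is
   reduced to this by multiplying z by i; conversely, odd multiples of i^Q w are source
   points because Re(e^{i alpha} j w) = j (k + 1/2). *)

Open Scope Z_scope.

Lemma mul_square_3mod4_eq_square (t v A : Z) : (4*t + 3) * (v*v) = A*A -> v = 0.
Proof.
  remember (Z.abs_nat v) as n eqn:Hn. revert v A Hn.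
  induction n as [n IH] using lt_wf_ind; intros v A Hn H.
  destruct (Z.eq_dec v 0) as [|Hv0]; [assumption|exfalso].
  (* Modulo 4, [v] and [A] must both be even; halving them contradicts minimality. *)
  destruct (Z.Even_or_Odd v) as [[w ->]|[w ->]], (Z.Even_or_Odd A) as [[B ->]|[B ->]].
  - apply Hv0. enough (w = 0) by lia.
    apply (IH (Z.abs_nat w) ltac:(lia) w B eq_refl). lia.
  - nia.
  - nia.
  - nia.
Qed.

Close Scope Z_scope.
Open Scope R_scope.

Tactic Notation "push_IZR" :=
  repeat first [rewrite plus_IZR | rewrite minus_IZR | rewrite mult_IZR | rewrite opp_IZR].
Tactic Notation "push_IZR" "in" hyp(H) :=
  repeat first [rewrite plus_IZR in H | rewrite minus_IZR in H | rewrite mult_IZR in H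
               | rewrite opp_IZR in H].

Lemma half_int_opp (x : R) : half_int (- x) <-> half_int x.
Proof.
  split; intros [n Hn]; exists (- n - 1)%Z; rewrite minus_IZR, opp_IZR; lra.
Qed.

Lemma half_int_mul_odd (m : Z) (x : R) : half_int x -> half_int (IZR (2*m + 1) * x).
Proof.
  intros [n ->]. exists ((2*m + 1) * n + m)%Z.
  push_IZR. field.
Qed.

Lemma rot_re_scale (alpha c x y : R) : rot_re alpha (c * x) (c * y) = c * rot_re alpha x y.
Proof. unfold rot_re; ring. Qed.

Lemma rot_im_scale (alpha c x y : R) : rot_im alpha (c * x) (c * y) = c * rot_im alpha x y.
Proof. unfold rot_im; ring. Qed.

Lemma rot_re_mul_i (alpha x y : R) : rot_re alpha (- y) x = - rot_im alpha x y.
Proof. unfold rot_re, rot_im; ring. Qed.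

Lemma rot_im_mul_i (alpha x y : R) : rot_im alpha (- y) x = rot_re alpha x y.
Proof. unfold rot_re, rot_im; ring. Qed.

Lemma rot_im_rot_re (alpha x y : R) : rot_im alpha x y = rot_re alpha y (- x).
Proof. unfold rot_re, rot_im; ring. Qed.

(* Real part of [e^{i alpha} z |w|^2 = (z conj w) (e^{i alpha} w)]. *)
Lemma rot_re_mul_norm (alpha a b p q : R) :
  rot_re alpha a b * (p^2 + q^2)
  = (a*p + b*q) * rot_re alpha p q + (a*q - b*p) * rot_im alpha p q.
Proof. unfold rot_re, rot_im; ring. Qed.

Lemma gen_triple_norm_pos (alpha : R) (p q k : Z) :
  gen_triple alpha p q k -> (0 < p*p + q*q)%Z.
Proof.
  intros [HK _]. apply lt_IZR. push_IZR. change (IZR 0) with 0.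
  pose proof (pow2_ge_0 (IZR k + / 2)). lra.
Qed.

Lemma gen_triple_scale_inv (alpha : R) (e p q k k0 : Z) :
  (0 < e)%Z -> (2*k + 1 = e * (2*k0 + 1))%Z ->
  gen_triple alpha (e*p) (e*q) k -> gen_triple alpha p q k0.
Proof.
  intros He Hk [HK [Hre Him]].
  rewrite !mult_IZR in HK, Hre, Him.
  rewrite rot_re_scale in Hre. rewrite rot_im_scale in Him.
  set (E := IZR e) in *. assert (HE : 0 < E) by (apply IZR_lt; exact He).
  assert (HkE : IZR k + / 2 = E * (IZR k0 + / 2)).
  { apply (f_equal IZR) in Hk. push_IZR in Hk. unfold E. lra. }
  rewrite HkE in HK, Hre, Him.
  assert (HK0 : (IZR k0 + / 2) ^ 2 < IZR p ^ 2 + IZR q ^ 2).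
  { rewrite !Rpow_mult_distr, <- Rmult_plus_distr_l in HK.
    exact (Rmult_lt_reg_l _ _ _ (pow_lt _ 2 HE) HK). }
  repeat split.
  - exact HK0.
  - apply (Rmult_eq_reg_l E); lra.
  - apply (Rmult_eq_reg_l E); [|lra]. rewrite Him.
    replace ((E * IZR p) ^ 2 + (E * IZR q) ^ 2 - (E * (IZR k0 + / 2)) ^ 2)
      with (E ^ 2 * (IZR p ^ 2 + IZR q ^ 2 - (IZR k0 + / 2) ^ 2)) by ring.
    rewrite sqrt_mult_alt, sqrt_pow2 by (apply pow2_ge_0 || lra). reflexivity.
Qed.

(* A common odd factor of [p], [q] and [2k+1] would give a generating triple of smaller norm. *)
Lemma primary_triple_coprime (alpha : R) (p q k : Z) :
  primary_triple alpha p q k -> Z.gcd (Z.gcd p q) (2*k + 1) = 1%Z.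
Proof.
  intros [Hgen Hmin].
  set (e := Z.gcd (Z.gcd p q) (2*k + 1)).
  assert (He : (0 < e)%Z).
  { pose proof (Z.gcd_nonneg (Z.gcd p q) (2*k + 1)).
    enough (e <> 0%Z) by lia. intros H0. apply Z.gcd_eq_0 in H0. lia. }
  destruct (Z.divide_trans _ _ _ (Z.gcd_divide_l _ (2*k + 1)) (Z.gcd_divide_l p q))
    as [p' Hp].
  destruct (Z.divide_trans _ _ _ (Z.gcd_divide_l _ (2*k + 1)) (Z.gcd_divide_r p q))
    as [q' Hq].
  destruct (Z.gcd_divide_r (Z.gcd p q) (2*k + 1)) as [o Ho]. fold e in Hp, Hq, Ho. clearbody e.
  destruct (Z.Even_or_Odd o) as [[o' ->]|[k0 ->]]; [lia|].
  assert (Hgen0 : gen_triple alpha p' q' k0).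
  { apply (gen_triple_scale_inv alpha e p' q' k k0 He); [lia|].
    rewrite Z.mul_comm, <- Hp, Z.mul_comm, <- Hq. exact Hgen. }
  specialize (Hmin _ _ _ Hgen0).
  pose proof (gen_triple_norm_pos _ _ _ _ Hgen0) as HN0.
  assert (Hee : (e * e * (p'*p' + q'*q') <= 1 * (p'*p' + q'*q'))%Z)
    by (rewrite !Z.pow_2_r in Hmin; subst p q; nia).
  apply Z.mul_le_mono_pos_r in Hee; nia.
Qed.

Lemma gen_triple_half_int_collinear (alpha : R) (p q k a b m : Z) :
  gen_triple alpha p q k -> rot_re alpha (IZR a) (IZR b) = IZR m + / 2 ->
  (a*q = b*p)%Z.
Proof.
  intros [HK [Hre Him]] Hm.
  set (L := sqrt (IZR p ^ 2 + IZR q ^ 2 - (IZR k + / 2) ^ 2)) in Him.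
  assert (HL : L * L = IZR p ^ 2 + IZR q ^ 2 - (IZR k + / 2) ^ 2)
    by (apply sqrt_sqrt; lra).
  set (v := (a*q - b*p)%Z).
  set (A := ((2*m + 1) * (p*p + q*q) - (2*k + 1) * (a*p + b*q))%Z).
  assert (HA : 2 * L * IZR v = IZR A).
  { pose proof (rot_re_mul_norm alpha (IZR a) (IZR b) (IZR p) (IZR q)) as E.
    rewrite Hm, Hre, Him in E. unfold v, A.
    push_IZR. lra. }
  enough (v = 0%Z) by (unfold v in *; lia).
  apply (mul_square_3mod4_eq_square (p*p + q*q - k*k - k - 1) v A), eq_IZR.
  rewrite !mult_IZR, <- HA.
  replace (2 * L * IZR v * (2 * L * IZR v)) with (4 * (L * L) * (IZR v * IZR v)) by ring.
  rewrite HL. push_IZR. field.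
Qed.

Lemma primary_triple_half_int_rot_re (alpha : R) (p q k a b : Z) :
  primary_triple alpha p q k -> half_int (rot_re alpha (IZR a) (IZR b)) ->
  exists j : Z, a = ((2*j + 1) * p)%Z /\ b = ((2*j + 1) * q)%Z.
Proof.
  intros Hprim [m Hm]. pose proof (primary_triple_coprime _ _ _ _ Hprim) as Hcop.
  destruct Hprim as [Hgen _].
  pose proof (gen_triple_half_int_collinear _ _ _ _ _ _ _ Hgen Hm) as Hcol.
  pose proof (gen_triple_norm_pos _ _ _ _ Hgen) as HN.
  set (d := Z.gcd p q) in Hcop.
  assert (Hd : d <> 0%Z) by (intros H0; apply Z.gcd_eq_0 in H0; lia).
  destruct (Z.gcd_bezout p q d eq_refl) as [x [y Hxy]].
  set (r := (a*x + b*y)%Z).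
  assert (Ha : (d * a = r * p)%Z).
  { rewrite <- Hxy. unfold r. transitivity (x*p*a + y*(a*q))%Z; [ring|]. rewrite Hcol. ring. }
  assert (Hb : (d * b = r * q)%Z).
  { rewrite <- Hxy. unfold r. transitivity (x*(b*p) + y*q*b)%Z; [ring|]. rewrite <- Hcol. ring. }
  assert (Hr : (d * (2*m + 1) = r * (2*k + 1))%Z).
  { destruct Hgen as [_ [Hre _]]. apply eq_IZR.
    assert (E : rot_re alpha (IZR d * IZR a) (IZR d * IZR b)
                = rot_re alpha (IZR r * IZR p) (IZR r * IZR q))
      by (rewrite <- !mult_IZR, Ha, Hb; reflexivity).
    rewrite !rot_re_scale, Hm, Hre in E.
    push_IZR. lra. }
  assert (Hdr : (d | r)%Z).
  { apply (Z.gauss d (2*k + 1) r); [exists (2*m + 1)%Z; lia | exact Hcop]. }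
  destruct Hdr as [j ->].
  assert (Hj : (2*m + 1 = j * (2*k + 1))%Z) by (apply (Z.mul_reg_l _ _ d Hd); lia).
  destruct (Z.Even_or_Odd j) as [[j' ->]|[j' ->]]; [lia|].
  exists j'. split; apply (Z.mul_reg_l _ _ d Hd); lia.
Qed.

Definition source_pair (alpha : R) (z : Z * Z) : Prop := source_point alpha (fst z) (snd z).

Lemma source_pair_mul_i (alpha : R) (z : Z * Z) :
  source_pair alpha (mul_i z) <-> source_pair alpha z.
Proof.
  destruct z as [a b]. unfold source_pair, source_point, in_H; simpl.
  rewrite opp_IZR, rot_re_mul_i, rot_im_mul_i, half_int_opp. tauto.
Qed.

Lemma source_pair_mul_iQ (alpha : R) (Q : nat) (z : Z * Z) :
  source_pair alpha (mul_iQ Q z) <-> source_pair alpha z.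
Proof.
  induction Q as [|Q IH]; [reflexivity|].
  unfold mul_iQ in *. simpl. rewrite source_pair_mul_i. exact IH.
Qed.

Lemma source_pair_zscale_odd (alpha : R) (m : Z) (z : Z * Z) :
  source_pair alpha z -> source_pair alpha (zscale (2*m + 1) z).
Proof.
  destruct z as [a b]. unfold source_pair, source_point, in_H, zscale; simpl.
  rewrite !(mult_IZR (2*m + 1)), rot_re_scale, rot_im_scale.
  intros [H|H]; [left|right]; apply half_int_mul_odd, H.
Qed.

Lemma mul_iQ_add2 (Q : nat) (z : Z * Z) : mul_iQ (2 + Q) z = zscale (-1) (mul_iQ Q z).
Proof. unfold mul_iQ, mul_i, zscale; simpl. f_equal; ring. Qed.

Lemma zscale_zscale (c c' : Z) (z : Z * Z) : zscale c (zscale c' z) = zscale (c * c') z.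
Proof. destruct z; unfold zscale; simpl. f_equal; ring. Qed.

Lemma zscale_odd_mul_iQ (j : Z) (Q : nat) (z : Z * Z) : (Q < 2)%nat ->
  exists (Q' l : nat), (Q' < 4)%nat /\
    zscale (2*j + 1) (mul_iQ Q z) = zscale (2 * Z.of_nat l + 1) (mul_iQ Q' z).
Proof.
  intros HQ. destruct (Z_le_gt_dec 0 j) as [Hj|Hj].
  - exists Q, (Z.to_nat j). split; [lia|]. rewrite Z2Nat.id by lia. reflexivity.
  - exists (2 + Q)%nat, (Z.to_nat (- j - 1)). split; [lia|].
    rewrite mul_iQ_add2, zscale_zscale, Z2Nat.id by lia. f_equal. lia.
Qed.

Theorem mainTheorem6 (alpha : R) (p q k : Z) :
  hinge_angle alpha ->
  primary_triple alpha p q k ->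
  forall a b : Z,
    source_point alpha a b <->
    exists (Q : nat) (l : nat), (Q < 4)%nat /\
      (a, b) = zscale (2 * Z.of_nat l + 1)%Z (mul_iQ Q (p, q)).
Proof.
  (* [hinge_angle alpha] is implied by the existence of a generating triple. *)
  intros _ Hprim a b. split.
  - intros [Hre|Him].
    + destruct (primary_triple_half_int_rot_re _ _ _ _ a b Hprim Hre) as [j [-> ->]].
      exact (zscale_odd_mul_iQ j 0 (p, q) ltac:(lia)).
    + rewrite rot_im_rot_re, <- opp_IZR in Him.
      destruct (primary_triple_half_int_rot_re _ _ _ _ b (- a) Hprim Him) as [j [Hb Ha]].
      destruct (zscale_odd_mul_iQ j 1 (p, q) ltac:(lia)) as [Q [l [HQ E]]].
      exists Q, l. split; [exact HQ|]. rewrite <- E.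
      change (mul_iQ 1 (p, q)) with (- q, p)%Z. unfold zscale; cbn [fst snd]. f_equal; lia.
  - intros [Q [l [_ E]]].
    change (source_pair alpha (a, b)). rewrite E.
    apply source_pair_zscale_odd, source_pair_mul_iQ.
    destruct Hprim as [[_ [Hre _]] _]. left. exists k. exact Hre.
Qed.
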